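(* Let $G$ be a cubic graph with a 3-decomposition, let $u$ be a vertex of $G$ with neighbours $v_1,v_2,v_3$, and let $H$ be obtained from $G$ by deleting $u$, adding a triangle $u_1u_2u_3u_1$ on new vertices, and adding the edges $u_1v_1,u_2v_2,u_3v_3$. Then $H$ has a 3-decomposition.
   Context: All graphs are finite and simple; cubic means 3-regular. A 3-decomposition of a graph is a partition of its edge set into the edge sets of a spanning tree, a (possibly empty) 2-regular subgraph, and a (possibly empty) matching. *)

From mathcomp Require Import all_boot.
Set Implicit Arguments. Unset Strict Implicit. Unset Printing Implicit Defensive.

Definition simple_graph (T : finType) (e : rel T) : Prop :=
  symmetric e /\ irreflexive e.

Definition edges (T : finType) (e : rel T) : {set {set T}} :=
  [set [set x; y] | x in T, y in T & e x y].

Definition cubic (T : finType) (e : rel T) : Prop :=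
  forall x : T, #|[set y | e x y]| = 3.

Definition sdeg (T : finType) (S : {set {set T}}) (x : T) : nat :=
  #|[set y | [set x; y] \in S]|.

Definition sadj (T : finType) (S : {set {set T}}) : rel T :=
  fun x y => [set x; y] \in S.

Definition has_cycle (T : finType) (S : {set {set T}}) : Prop :=
  exists s : seq T, [/\ 3 <= size s, uniq s & cycle (sadj S) s].

Definition spanning_tree (T : finType) (e : rel T) (S : {set {set T}}) : Prop :=
  [/\ S \subset edges e,
      (forall x y : T, connect (sadj S) x y) & ~ has_cycle S].

Definition two_regular_sub (T : finType) (e : rel T) (S : {set {set T}}) : Prop :=
  S \subset edges e /\ forall x : T, sdeg S x = 0 \/ sdeg S x = 2.

Definition matching (T : finType) (e : rel T) (S : {set {set T}}) : Prop :=
  S \subset edges e /\ forall x : T, sdeg S x <= 1.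

Definition three_decomposition (T : finType) (e : rel T) : Prop :=
  exists F C M : {set {set T}},
    [/\ spanning_tree e F, two_regular_sub e C, matching e M,
        F :|: C :|: M = edges e &
        [/\ [disjoint F & C], [disjoint F & M] & [disjoint C & M]]].

(* The graph H: delete u, add triangle on new vertices inr 0, inr 1, inr 2,
   and join inr i to v i. *)
Definition Hvert (V : finType) (u : V) : finType :=
  ({x : V | x != u} + 'I_3)%type.

Definition Hrel (V : finType) (e : rel V) (u : V) (v : 'I_3 -> V)
  : rel (Hvert u) :=
  fun a b =>
    match a, b with
    | inl x, inl y => e (val x) (val y)
    | inr i, inr j => i != j
    | inl x, inr j => val x == v j
    | inr i, inl y => val y == v i
    end.
Arguments Hrel {V} e u v.

(* Contracting the triangle u_1 u_2 u_3 of H back to u maps H onto G. Each class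
   of the decomposition of G is lifted along this contraction, the edge u v_i
   becoming u_i v_i, and the triangle is shared out as follows: the two edges at
   a corner u_k join the tree, and the opposite edge joins the 2-regular part or
   the matching. If u lies on a cycle of the 2-regular part, through v_i and v_j
   say, the edge u_i u_j closes that cycle again; otherwise the opposite edge can
   join the matching, choosing u_k at the end of the matching edge at u if there
   is one. The lifted tree is connected because its contraction is, and acyclic
   because all its edges are bridges: an edge mapped onto an edge of the tree of
   G is the only edge mapped there, so it inherits being a bridge, and u_i u_k
   separates u_i, together with the component of v_i in the tree of G minus
   u v_i, from the rest. *)

From mathcomp Require Import all_boot.
Set Implicit Arguments. Unset Strict Implicit. Unset Printing Implicit Defensive.

Section EdgeSets.

Variable T : finType.
Implicit Types (r : rel T) (S : {set {set T}}) (a b c d x y : T).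

Lemma eq_set2_cases a b c d :
  [set a; b] = [set c; d] -> (a = c /\ b = d) \/ (a = d /\ b = c).
Proof.
move=> E.
have : a \in [set c; d] by rewrite -E set21.
have : b \in [set c; d] by rewrite -E set22.
have : c \in [set a; b] by rewrite E set21.
have : d \in [set a; b] by rewrite E set22.
by do 4 case/set2P=> ?; subst; auto.
Qed.

Lemma edgesP r A :
  reflect (exists x y, r x y /\ A = [set x; y]) (A \in edges r).
Proof.
apply: (iffP imset2P) => [[x y _] | [x [y [rxy ->]]]].
  by rewrite inE => /andP[_ rxy] ->; exists x, y.
by exists x y; rewrite ?inE.
Qed.

Lemma mem_edges r : symmetric r -> forall x y, ([set x; y] \in edges r) = r x y.
Proof.
move=> r_sym x y; apply/edgesP/idP => [[a [b [rab /eq_set2_cases]]] | rxy].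
  by case=> -[-> ->] //; rewrite r_sym.
by exists x, y.
Qed.

Lemma sub_edges r r' : subrel r r' -> edges r \subset edges r'.
Proof.
move=> rr'; apply/subsetP => _ /edgesP[x [y [rxy ->]]].
by apply/edgesP; exists x, y; split; first exact: rr'.
Qed.

Lemma eq_edges r r' : r =2 r' -> edges r = edges r'.
Proof.
by move=> rr'; apply/eqP; rewrite eqEsubset !sub_edges // => x y; rewrite rr'.
Qed.

Lemma edgesU r r' : edges (relU r r') = edges r :|: edges r'.
Proof.
apply/setP => A; rewrite inE; apply/edgesP/orP => [[x [y [/orP[] rxy ->]]] | []].
- by left; apply/edgesP; exists x, y.
- by right; apply/edgesP; exists x, y.
- by case/edgesP => x [y [rxy ->]]; exists x, y; rewrite /= rxy.
- by case/edgesP => x [y [rxy ->]]; exists x, y; rewrite /= rxy orbT.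
Qed.

Lemma sadj_sym S : symmetric (sadj S).
Proof. by move=> x y; rewrite /sadj setUC. Qed.

Definition bridge S a b := ~~ connect (sadj (S :\ [set a; b])) a b.

Lemma bridge_sym S a b : bridge S a b = bridge S b a.
Proof. by rewrite /bridge setUC (sym_connect_sym (sadj_sym _)). Qed.

Lemma acyclic_bridge S x y :
  ~ has_cycle S -> x != y -> [set x; y] \in S -> bridge S x y.
Proof.
move=> acyc xy xyS; apply/negP => /connectP[p].
case/shortenP => -[|z q] pth uq _ /= yl; first by rewrite -yl eqxx in xy.
apply: acyc; exists (x :: z :: q); split => //.
  case: q pth uq yl => [|w q] //= /andP[xz _] _ yz.
  by move: xz; rewrite -yz /sadj setD11.
have subS : subrel (sadj (S :\ [set x; y])) (sadj S).
  by move=> a b; rewrite /sadj inE => /andP[].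
by rewrite /cycle rcons_path (sub_path subS pth) /= -yl /sadj setUC.
Qed.

Lemma bridges_acyclic S :
  (forall a b, [set a; b] \in S -> bridge S a b) -> ~ has_cycle S.
Proof.
move=> bS [[|a [|b [|c q]]] [//= _ uq]].
rewrite rcons_path => /and3P[abS bcS /andP[cqS lst]].
have pth : path (sadj S) b (c :: q) by rewrite /= bcS.
move: uq; rewrite /= !inE !negb_or => /andP[/and3P[ab ac aq] /andP[/andP[bc bq] _]].
have := bS a b abS; rewrite bridge_sym => /negP; apply; apply/connectP.
exists (rcons (c :: q) a); last by rewrite last_rcons.
have ne_ba x y : x != a -> y != a -> [set x; y] != [set b; a].
  move=> xa ya; apply/negP => /eqP/eq_set2_cases[[_ ya'] | [xa' _]].
  - by rewrite ya' eqxx in ya.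
  - by rewrite xa' eqxx in xa.
rewrite rcons_path; apply/andP; split.
  apply: (sub_in_path (P := predC1 a) _ _ pth).
    by move=> x y xa ya xyS; rewrite /sadj in_setD1 ne_ba.
  by rewrite /= eq_sym ab eq_sym ac; apply/allP => z zq /=; apply: contraNneq aq => <-.
move: lst; rewrite /= /sadj in_setD1 => ->; rewrite andbT.
apply/negP => /eqP/eq_set2_cases[[lb _] | [_ ab']].
- have := mem_last c q; rewrite lb inE (negbTE bq) orbF => /eqP bc'.
  by rewrite bc' eqxx in bc.
- by rewrite ab' eqxx in ab.
Qed.

End EdgeSets.

Section ConnectMap.

Variables (T T' : finType) (f : T -> T') (r : rel T) (r' : rel T').

Lemma connect_map :
  (forall x y, r x y -> connect r' (f x) (f y)) ->
  forall x y, connect r x y -> connect r' (f x) (f y).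
Proof.
move=> hom x _ /connectP[p pth ->]; elim: p x pth => [|y p IH] x /=.
  by move=> _; apply: connect0.
by move=> /andP[/hom xy /IH]; apply: connect_trans.
Qed.

Lemma connect_lift :
  (forall y, exists x, f x = y) -> (forall x y, f x = f y -> connect r x y) ->
  (forall x y, r' (f x) (f y) -> connect r x y) ->
  forall x y, connect r' (f x) (f y) -> connect r x y.
Proof.
move=> f_surj fibre edge x y /connectP[p]; elim: p x => [|z p IH] x /=.
  by move=> _ /esym/fibre.
move=> /andP[xz pth] lst; have [w fw] := f_surj z; subst z.
exact: connect_trans (edge _ _ xz) (IH _ pth lst).
Qed.

End ConnectMap.

Lemma connect_isolated (T : finType) (r : rel T) x y :
  (forall z, ~~ r x z) -> connect r x y -> x = y.
Proof.
by move=> nx /connectP[[|z p] //= /andP[xz _]]; rewrite (negbTE (nx z)) in xz.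
Qed.

Lemma bridge_pullback (T T' : finType) (f : T -> T') (L : {set {set T}})
    (S : {set {set T'}}) a b :
  (forall c d, [set c; d] \in L :\ [set a; b] ->
     f c = f d \/ [set f c; f d] \in S :\ [set f a; f b]) ->
  bridge S (f a) (f b) -> bridge L a b.
Proof.
move=> hom; apply: contra; apply: connect_map => c d /hom[-> | cdS].
  exact: connect0.
exact: connect1.
Qed.

Section Triangle.

Implicit Types i j k : 'I_3.

Definition star k : rel 'I_3 := fun i j => (i != j) && ((i == k) || (j == k)).

Definition opposite_if (K : bool) k : rel 'I_3 :=
  fun i j => [&& K, i != j, i != k & j != k].

Lemma star_sym k : symmetric (star k).
Proof. by move=> i j; rewrite /star eq_sym orbC. Qed.

Lemma opposite_if_sym K k : symmetric (opposite_if K k).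
Proof. by move=> i j; rewrite /opposite_if [j == i]eq_sym [(j != k) && _]andbC. Qed.

Lemma star_neq k i j : star k i j -> i != j.
Proof. by move=> /andP[]. Qed.

Lemma opposite_if_neq K k i j : opposite_if K k i j -> i != j.
Proof. by move=> /and3P[]. Qed.

Lemma star_opposite_if K k i j : star k i j -> ~~ opposite_if K k i j.
Proof. by rewrite /star /opposite_if => /andP[-> /orP[] ->]; rewrite !andbF. Qed.

Lemma opposite_if_negb K k i j : opposite_if K k i j -> ~~ opposite_if (~~ K) k i j.
Proof. by rewrite /opposite_if => /andP[-> _]. Qed.

Lemma star_opposite_cover K k i j :
  [|| star k i j, opposite_if K k i j | opposite_if (~~ K) k i j] = (i != j).
Proof.
rewrite /star /opposite_if.
by case: (i == j); case: (i == k); case: (j == k); case: K.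
Qed.

Lemma card_opposite_if K k i : #|[set j | opposite_if K k i j]| = K && (i != k).
Proof.
case: K; last by apply: eq_card0 => j; rewrite inE.
have [-> | ik] := eqVneq i k.
  by apply: eq_card0 => j; rewrite !inE /opposite_if eqxx andbF.
have -> : [set j | opposite_if true k i j] = ~: [set i; k].
  by apply/setP => j; rewrite !inE /opposite_if ik negb_or /= eq_sym.
by have := cardsC [set i; k]; rewrite cards2 ik card_ord => /(@addnI 2 _ 1).
Qed.

Lemma triangle_choice (c m : {set 'I_3}) :
  #|c| = 0 \/ #|c| = 2 -> #|m| <= 1 ->
  exists k (K : bool), forall i,
    (i \in c) = K && (i != k) /\ (i \in m) + (~~ K && (i != k)) <= 1.
Proof.
case=> [c0 | c2] m1.
  have -> : c = set0 by apply/eqP; rewrite -cards_eq0 c0.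
  have [-> | [k km]] := set_0Vmem m.
    by exists ord0, false => i; rewrite !inE add0n leq_b1.
  exists k, false => i; rewrite inE; split=> //=.
  have [im | _] := boolP (i \in m); last by rewrite add0n leq_b1.
  by rewrite ((card_le1P m1) k km i) in im; rewrite (eqP im) eqxx.
have /card_gt0P[k] : 0 < #|~: c| by rewrite -(leq_add2l #|c|) cardsC c2 card_ord.
rewrite inE => kc.
have -> : c = [set~ k].
  apply/eqP; rewrite eqEcard cardsC1 card_ord c2 leqnn andbT.
  by apply/subsetP => i ic; rewrite !inE; apply: contraNneq kc => <-.
by exists k, true => i; rewrite !inE addn0 leq_b1.
Qed.

End Triangle.

Section Expansion.

Variables (V : finType) (e : rel V) (u : V) (v : 'I_3 -> V).
Hypotheses (e_sym : symmetric e) (e_irr : irreflexive e) (e_cubic : cubic e).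
Hypotheses (v_inj : injective v) (e_uv : forall i, e u (v i)).

Implicit Types (S F C M : {set {set V}}) (t : rel 'I_3) (i j k : 'I_3).
Implicit Types (a b c d : Hvert u).

Lemma v_neq_u i : v i != u.
Proof. by apply: contraTneq (e_uv i) => ->; rewrite e_irr. Qed.

Lemma adj_u y : e u y -> exists i, y = v i.
Proof.
move=> uy; have : y \in [set y | e u y] by rewrite inE.
suff <- : v @: setT = [set y | e u y] by case/imsetP=> i _ ->; exists i.
apply/eqP; rewrite eqEcard e_cubic card_imset // cardsT card_ord leqnn andbT.
by apply/subsetP => _ /imsetP[i _ ->]; rewrite inE.
Qed.

Definition contract a : V := if a is inl x then val x else u.

Definition lift_rel S t : rel (Hvert u) := fun a b =>
  match a, b with
  | inl x, inl y => [set val x; val y] \in S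
  | inr i, inr j => t i j
  | inl x, inr j => (val x == v j) && ([set u; v j] \in S)
  | inr i, inl y => (val y == v i) && ([set u; v i] \in S)
  end.

Definition lift S t := edges (lift_rel S t).

Lemma lift_rel_sym S t : symmetric t -> symmetric (lift_rel S t).
Proof. by move=> t_sym [x|i] [y|j] //=; rewrite setUC. Qed.

Lemma mem_lift S t a b :
  symmetric t -> ([set a; b] \in lift S t) = lift_rel S t a b.
Proof. by move=> t_sym; rewrite mem_edges //; apply: lift_rel_sym. Qed.

Lemma liftU S S' t t' : lift S t :|: lift S' t' = lift (S :|: S') (relU t t').
Proof.
by rewrite -edgesU; apply: eq_edges => -[x|i] [y|j]; rewrite /= ?inE // andb_orr.
Qed.

Lemma lift_edges t :
  (forall i j, t i j = (i != j)) -> lift (edges e) t = edges (Hrel e u v).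
Proof.
move=> tE; apply: eq_edges => -[x|i] [y|j] /=; last exact: tE.
- exact: mem_edges.
- by rewrite mem_edges // e_uv andbT.
- by rewrite mem_edges // e_uv andbT.
Qed.

Lemma lift_subset S S' t t' :
  S \subset S' -> subrel t t' -> lift S t \subset lift S' t'.
Proof.
move=> /subsetP SS' tt'; apply: sub_edges => -[x|i] [y|j] /=; last exact: tt'.
- exact: SS'.
- by move=> /andP[-> /SS'].
- by move=> /andP[-> /SS'].
Qed.

Lemma lift_disjoint S S' t t' :
  symmetric t' -> [disjoint S & S'] -> (forall i j, t i j -> ~~ t' i j) ->
  [disjoint lift S t & lift S' t'].
Proof.
move=> t'_sym SS' tt'; rewrite -setI_eq0; apply/eqP/setP => A; rewrite !inE.
apply/negP => /andP[/edgesP[a [b [L ->]]]]; rewrite mem_lift //; apply/negP.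
case: a b L => [x|i] [y|j] /=; last exact: tt'.
- by move=> xyS; rewrite (disjointFr SS' xyS).
- by move=> /andP[_ uyS]; rewrite (disjointFr SS' uyS) andbF.
- by move=> /andP[_ uyS]; rewrite (disjointFr SS' uyS) andbF.
Qed.

Lemma lift_sdeg_inl S t x :
  S \subset edges e -> symmetric t -> sdeg (lift S t) (inl x) = sdeg S (val x).
Proof.
move=> /subsetP S_e t_sym; rewrite /sdeg.
have -> : [set y | [set val x; y] \in S] = contract @: [set b | lift_rel S t (inl x) b].
  apply/setP => y; rewrite inE; apply/idP/imsetP => [xyS | [[y'|j]]]; rewrite ?inE /=.
  - have [yu | yu] := eqVneq y u; last first.
      by exists (inl (exist _ y yu)); rewrite // inE; exact: xyS.
    subst y; have [i xi] : exists i, val x = v i.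
      by apply: adj_u; rewrite e_sym -mem_edges // S_e.
    by exists (inr i); rewrite // inE /= xi eqxx -xi setUC.
  - by move=> ? ->.
  - by move=> /andP[/eqP <- ?] ->; rewrite setUC.
rewrite card_in_imset; first by apply: eq_card => b; rewrite !inE mem_lift.
move=> [y1|j1] [y2|j2]; rewrite !inE /=.
- by move=> _ _ /val_inj ->.
- by move=> _ _ y1u; case/eqP: (valP y1).
- by move=> _ _ uy2; case/eqP: (valP y2).
- by move=> /andP[/eqP x1 _] /andP[/eqP x2 _] _; rewrite (v_inj (etrans (esym x1) x2)).
Qed.

Lemma lift_sdeg_inr S t i :
  symmetric t -> sdeg (lift S t) (inr i) = ([set u; v i] \in S) + #|[set j | t i j]|.
Proof.
move=> t_sym; rewrite /sdeg -sum1_card.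
rewrite (eq_bigl (lift_rel S t (inr i))) => [|b]; last by rewrite inE mem_lift.
rewrite big_sumType /= !sum1_card; congr addn; last first.
  by apply: eq_card => j; rewrite unfold_in inE.
have [uiS | _] := boolP ([set u; v i] \in S); last first.
  by apply: eq_card0 => y; rewrite unfold_in andbF.
transitivity #|pred1 (exist (fun y => y != u) (v i) (v_neq_u i))|; last exact: card1.
apply: eq_card => y.
by rewrite unfold_in andbT inE -val_eqE.
Qed.

Lemma sdeg_u S : S \subset edges e -> sdeg S u = #|[set i | [set u; v i] \in S]|.
Proof.
move=> /subsetP S_e; rewrite /sdeg -(card_imset _ v_inj).
apply: eq_card => y; rewrite inE.
apply/idP/imsetP => [uyS | [i]]; last by rewrite inE => ? ->.
have [i yi] : exists i, y = v i by apply: adj_u; rewrite -mem_edges // S_e.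
by subst y; exists i; rewrite ?inE.
Qed.

Lemma lift_sub_edges S t :
  S \subset edges e -> (forall i j, t i j -> i != j) ->
  lift S t \subset edges (Hrel e u v).
Proof.
by move=> S_e t_neq; rewrite -(lift_edges (t := fun i j => i != j)) // lift_subset.
Qed.

Lemma contract_edge S t a b :
  lift_rel S t a b -> contract a != contract b -> [set contract a; contract b] \in S.
Proof.
case: a b => [x|i] [y|j] //=.
- by move=> /andP[/eqP-> ?]; rewrite setUC.
- by move=> /andP[/eqP->].
- by rewrite eqxx.
Qed.

Lemma contract_edge_inj S t a b c d :
  symmetric t -> lift_rel S t a b -> lift_rel S t c d -> contract a != contract b ->
  contract c = contract a -> contract d = contract b -> c = a /\ d = b.
Proof.
move=> t_sym.
suff c_eq a' b' c' d' : lift_rel S t a' b' -> lift_rel S t c' d' ->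
    contract a' != contract b' -> contract c' = contract a' ->
    contract d' = contract b' -> c' = a'.
  move=> Lab Lcd ab ca db; split; first exact: c_eq Lab Lcd ab ca db.
  by apply: (c_eq b a d c); rewrite 1?lift_rel_sym 1?eq_sym.
case: a' c' => [x|i] [z|l] /=.
- by move=> _ _ _ /val_inj->.
- by move=> _ _ _ ux; case/eqP: (valP x).
- by move=> _ _ _ zu; case/eqP: (valP z).
case: b' => [y|j]; last by rewrite /= eqxx.
case: d' => [w|m] /=.
- move=> /andP[/eqP yi _] /andP[/eqP wl _] _ _ wy.
  by rewrite (v_inj (etrans (esym wl) (etrans wy yi))).
- by move=> _ _ _ _ uy; case/eqP: (valP y).
Qed.

Lemma lift_bridge S t a b :
  symmetric t -> ~ has_cycle S -> lift_rel S t a b -> contract a != contract b ->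
  bridge (lift S t) a b.
Proof.
move=> t_sym acyc Lab ab; apply: (bridge_pullback (f := contract) (S := S)); last first.
  exact: acyclic_bridge acyc ab (contract_edge Lab ab).
move=> c d; rewrite in_setD1 mem_lift // => /andP[cd_ab Lcd].
have [-> | cd] := eqVneq (contract c) (contract d); [by left | right].
rewrite in_setD1 (contract_edge Lcd cd) andbT; apply: contra_neq cd_ab.
case/eq_set2_cases=> [[ca db] | [cb da]].
  by have [-> ->] := contract_edge_inj t_sym Lab Lcd ab ca db.
have Lba : lift_rel S t b a by rewrite lift_rel_sym.
have ba : contract b != contract a by rewrite eq_sym.
by have [-> ->] := contract_edge_inj t_sym Lba Lcd ba cb da; rewrite setUC.
Qed.

Lemma lift_star_isolated_bridge F k i :
  [set u; v i] \notin F -> i != k -> bridge (lift F (star k)) (inr i) (inr k).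
Proof.
move=> uiF ik.
have isolated z : ~~ sadj (lift F (star k) :\ [set inr i; inr k]) (inr i) z.
  rewrite /sadj in_setD1 mem_lift; last exact: star_sym.
  case: z => [y | j] /=; first by rewrite (negbTE uiF) !andbF.
  have [-> | jk] := eqVneq j k; first by rewrite eqxx.
  by rewrite /star (negbTE ik) (negbTE jk) !andbF.
apply/negP => /(connect_isolated isolated) [ik'].
by rewrite ik' eqxx in ik.
Qed.

Lemma lift_star_pendant_bridge F k i :
  ~ has_cycle F -> [set u; v i] \in F -> i != k ->
  bridge (lift F (star k)) (inr i) (inr k).
Proof.
move=> acyc uiF ik; have sk := @star_sym k.
(* Under [g] the edge u_i u_k becomes the bridge v_i u of F. *)
pose g a := if a == inr i then v i else contract a.
have gi : g (inr i) = v i by rewrite /g eqxx.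
have gk : g (inr k) = u by rewrite /g (inj_eq inr_inj) eq_sym (negbTE ik).
apply: (bridge_pullback (f := g) (S := F)); last first.
  by rewrite gi gk; apply: acyclic_bridge acyc (v_neq_u i) _; rewrite setUC.
have edge_i d : lift_rel F (star k) (inr i) d ->
    [set inr i; d] != [set inr i; inr k] -> g d = v i.
  case: d => [y|j] /=; first by move=> /andP[/eqP yi _] _; rewrite /g /= yi.
  by rewrite /star (negbTE ik) => /andP[_ /eqP ->]; rewrite eqxx.
move=> c d; rewrite in_setD1 mem_lift // gi gk => /andP[cd_ik Lcd].
have [ci | ci] := eqVneq c (inr i); first by subst c; left; rewrite gi edge_i.
have [di | di] := eqVneq d (inr i).
  subst d; have Lic : lift_rel F (star k) (inr i) c by rewrite lift_rel_sym.
  by left; rewrite gi (edge_i c) // setUC.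
rewrite /g (negbTE ci) (negbTE di).
have [-> | cd] := eqVneq (contract c) (contract d); [by left | right].
rewrite in_setD1 (contract_edge Lcd cd) andbT; apply/negP => /eqP /eq_set2_cases.
pose vi : Hvert u := inl (exist _ (v i) (v_neq_u i)).
have Liv : lift_rel F (star k) (inr i) vi by rewrite /= eqxx.
have Lvi : lift_rel F (star k) vi (inr i) by rewrite lift_rel_sym.
case=> [[cv du] | [cu dv]].
- have [_ /eqP] := contract_edge_inj sk Lvi Lcd (v_neq_u i) cv du.
  by rewrite (negbTE di).
- have ui : u != v i by rewrite eq_sym v_neq_u.
  by have [/eqP] := contract_edge_inj sk Liv Lcd ui cu dv; rewrite (negbTE ci).
Qed.

Lemma lift_star_bridge F k i :
  ~ has_cycle F -> i != k -> bridge (lift F (star k)) (inr i) (inr k).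
Proof.
move=> acyc ik; have [uiF | uiF] := boolP ([set u; v i] \in F).
- exact: lift_star_pendant_bridge.
- exact: lift_star_isolated_bridge.
Qed.

Lemma lift_star_connected F k :
  F \subset edges e -> (forall x y, connect (sadj F) x y) ->
  forall a b, connect (sadj (lift F (star k))) a b.
Proof.
move=> /subsetP F_e F_conn.
have sadjE a b : sadj (lift F (star k)) a b = lift_rel F (star k) a b.
  by rewrite /sadj mem_lift //; apply: star_sym.
have conn_sym := sym_connect_sym (sadj_sym (lift F (star k))).
have to_k i : connect (sadj (lift F (star k))) (inr i) (inr k).
  have [-> | ik] := eqVneq i k; first exact: connect0.
  by apply: connect1; rewrite sadjE /= /star ik eqxx orbT.
have tri i j : connect (sadj (lift F (star k))) (inr i) (inr j).
  by apply: connect_trans (to_k i) _; rewrite conn_sym.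
have to_tri x j :
    [set val x; u] \in F -> connect (sadj (lift F (star k))) (inl x) (inr j).
  move=> xuF; have [i xi] : exists i, val x = v i.
    by apply: adj_u; rewrite e_sym -mem_edges // F_e.
  by apply: connect_trans (tri i j); apply: connect1; rewrite sadjE /= xi eqxx -xi setUC.
move=> a b; apply: (connect_lift (f := contract) (r' := sadj F)) (F_conn _ _).
- move=> y; have [-> | yu] := eqVneq y u; first by exists (inr k).
  by exists (inl (exist _ y yu)).
- case=> [x|i] [y|j] /=.
  + by move=> /val_inj->; apply: connect0.
  + by move=> xu; case/eqP: (valP x).
  + by move=> uy; case/eqP: (valP y).
  + by move=> _; apply: tri.
- case=> [x|i] [y|j] /=.
  + by move=> xyF; apply: connect1; rewrite sadjE.
  + exact: to_tri.
  + by rewrite conn_sym /sadj setUC => /to_tri.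
  + by move=> _; apply: tri.
Qed.

Lemma lift_star_acyclic F k :
  F \subset edges e -> ~ has_cycle F -> ~ has_cycle (lift F (star k)).
Proof.
move=> /subsetP F_e acyc; apply: bridges_acyclic => a b.
rewrite mem_lift; last exact: star_sym.
move=> Lab; have [ab | ab] := eqVneq (contract a) (contract b); last first.
  by apply: lift_bridge Lab ab => //; apply: star_sym.
case: a b Lab ab => [x|i] [y|j] /=.
- move=> /F_e xyF xy; move: xyF; rewrite xy mem_edges //.
  by rewrite e_irr.
- by move=> _ xu; case/eqP: (valP x).
- by move=> _ uy; case/eqP: (valP y).
- move=> /andP[ij /orP[/eqP ik | /eqP jk]] _.
  + by subst i; rewrite bridge_sym; apply: lift_star_bridge; rewrite // eq_sym.
  + by subst j; apply: lift_star_bridge.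
Qed.

Lemma lift_star_spanning_tree F k :
  spanning_tree e F -> spanning_tree (Hrel e u v) (lift F (star k)).
Proof.
move=> [F_e F_conn acyc]; split.
- exact: lift_sub_edges (@star_neq k).
- exact: lift_star_connected.
- exact: lift_star_acyclic.
Qed.

Lemma lift_two_regular C K k :
  two_regular_sub e C -> (forall i, ([set u; v i] \in C) = K && (i != k)) ->
  two_regular_sub (Hrel e u v) (lift C (opposite_if K k)).
Proof.
move=> [C_e C_deg] Cu; split; first exact: lift_sub_edges (@opposite_if_neq K k).
have sym := @opposite_if_sym K k.
case=> [x | i]; first by rewrite lift_sdeg_inl.
by rewrite lift_sdeg_inr // card_opposite_if Cu; case: (K && _); [right | left].
Qed.

Lemma lift_matching M K k :
  matching e M -> (forall i, ([set u; v i] \in M) + (K && (i != k)) <= 1) ->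
  matching (Hrel e u v) (lift M (opposite_if K k)).
Proof.
move=> [M_e M_deg] Mu; split; first exact: lift_sub_edges (@opposite_if_neq K k).
have sym := @opposite_if_sym K k.
case=> [x | i]; first by rewrite lift_sdeg_inl.
by rewrite lift_sdeg_inr // card_opposite_if.
Qed.

End Expansion.

Unset Implicit Arguments.

Theorem lemma14 (V : finType) (e : rel V) (u : V) (v : 'I_3 -> V) :
  simple_graph e -> cubic e -> three_decomposition e ->
  injective v -> (forall i, e u (v i)) ->
  three_decomposition (Hrel e u v).
Proof.
move=> [e_sym e_irr] e_cubic [F [C [M [F_tree C_reg M_match FCM [FC FM CM]]]]].
move=> v_inj e_uv.
have C_u := C_reg.2 u; rewrite (sdeg_u e_sym e_cubic v_inj e_uv C_reg.1) in C_u.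
have M_u := M_match.2 u; rewrite (sdeg_u e_sym e_cubic v_inj e_uv M_match.1) in M_u.
have [k [K Ku]] := triangle_choice C_u M_u.
exists (lift u v F (star k)), (lift u v C (opposite_if K k)),
  (lift u v M (opposite_if (~~ K) k)); split.
- exact: lift_star_spanning_tree.
- by apply: lift_two_regular => // i; have [+ _] := Ku i; rewrite inE.
- by apply: lift_matching => // i; have [_] := Ku i; rewrite inE.
- by rewrite !liftU FCM lift_edges // => i j; rewrite /= -orbA star_opposite_cover.
- split; apply: lift_disjoint => //; try exact: opposite_if_sym.
  + exact: star_opposite_if.
  + exact: star_opposite_if.
  + exact: opposite_if_negb.
Qed.
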